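(* Let $B$ be a bipartite caching graph with $K$ left (user) vertices and $F$ right (subfile) vertices which is bi-regular: every left vertex has degree $D=F(1-\frac{M}{N})$ and every right vertex has degree $d=K(1-\frac{M}{N})$, and assume the number of files satisfies $N\ge K(1-\frac{M}{N})$. Define $\rho_1=D$ and, for $j=2,\dots,d$, $\rho_j=\Big\lceil\frac{(d-j+1)\rho_{j-1}}{K-j+1}\Big\rceil$. Then the infimum $R^*$ of all achievable rates for the caching scheme defined by $B$ satisfies $$R^*F\ge\sum_{j=1}^{d}\rho_j= D+\Big\lceil\tfrac{(d-1)D}{K-1}\Big\rceil+\cdots+\Big\lceil\tfrac{1}{\frac{KM}{N}+1}\Big\lceil\tfrac{2}{\frac{KM}{N}+2}\Big\lceil\cdots\Big\lceil\tfrac{d-2}{K-2}\Big\lceil\tfrac{(d-1)D}{K-1}\Big\rceil\Big\rceil\cdots\Big\rceil\Big\rceil\Big\rceil.$$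
   Context: Coded caching setup: a server holds $N$ files, each consisting of $F$ subfiles that are independent and uniform over a finite abelian group (unit entropy each), connected by an error-free broadcast link to $K$ users each able to cache $M$ files. The bipartite caching graph $B$ defines the symmetric caching scheme in which user $k$ caches the $f$-th subfile of every file iff $\{k,f\}$ is not an edge, and caches no $f$-th subfile otherwise. Given this caching, a rate $R$ is achievable if a (possibly nonlinear) delivery scheme exists which, for every demand vector (each user demanding one file), broadcasts a message of total size $RF$ subfile units from which every user recovers its demanded file using its cache. *)

From mathcomp Require Import all_boot all_algebra.
From Stdlib Require Import Reals.
Set Implicit Arguments. Unset Strict Implicit. Unset Printing Implicit Defensive.

Definition cdivn (a b : nat) : nat := (a + b.-1) %/ b.

(* rho_seq K d D i = rho_{i+1}:  rho_1 = D,
   rho_j = ceil((d-j+1) rho_{j-1} / (K-j+1))  for j >= 2. *)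
Fixpoint rho_seq (K d D : nat) (i : nat) : nat :=
  match i with
  | 0 => D
  | i'.+1 => cdivn ((d - i) * rho_seq K d D i') (K - i)
  end.

Definition library (G : finType) (N F : nat) := {ffun 'I_N * 'I_F -> G}.

(* Cache content of user k under the caching graph e (e k f = edge {k,f}):
   user k holds subfile f of every file iff {k,f} is NOT an edge. *)
Definition cache_of (G : finType) (N K F : nat) (e : 'I_K -> 'I_F -> bool)
  (k : 'I_K) (W : library G N F) : {ffun 'I_N * 'I_F -> option G} :=
  [ffun nf => if e k nf.2 then None else Some (W nf)].

(* Rate r is achievable for the caching scheme of e: for every demand vector,
   there is a (possibly nonlinear) broadcast message of at most |G|^(rF)
   values (i.e. of size rF subfile units) from which every user k recovers
   its demanded file from the message and its cache, for every library. *)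
Definition achievable_rate (G : finType) (N K F : nat)
  (e : 'I_K -> 'I_F -> bool) (r : R) : Prop :=
  forall dem : 'I_K -> 'I_N,
  exists (m : nat) (enc : library G N F -> 'I_m)
         (dec : 'I_K -> 'I_m -> {ffun 'I_N * 'I_F -> option G} -> {ffun 'I_F -> G}),
    (INR m <= Rpower (INR #|G|) (r * INR F))%R /\
    forall (W : library G N F) (k : 'I_K),
      dec k (enc W) (cache_of e k W) = [ffun f => W (dem k, f)].

From mathcomp Require Import all_boot all_algebra.
From Stdlib Require Import Reals Lra.
From mathcomp Require Import zify.
Set Implicit Arguments. Unset Strict Implicit. Unset Printing Implicit Defensive.

(* Let users u_1, ..., u_d demand files 1, ..., d and let S_j be the set of
   subfiles cached by none of u_1, ..., u_j.  Restrict to libraries vanishing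
   outside the S_j-part of every file j.  For such libraries the cache of u_j
   only shows entries of files i < j, since the S_i-part of a file i >= j is
   uncached by u_j; so, decoding u_1, u_2, ... in turn, the message determines
   the whole library and |G|^(|S_1| + ... + |S_d|) <= |G|^(R F).  Choosing the
   u_j greedily, each subfile of S_j has d - j neighbours among the K - j
   remaining users by right-regularity, so averaging yields some u_{j+1} with
   (K - j) |S_{j+1}| >= (d - j) |S_j|; as |S_1| = D, this gives |S_j| >= rho_j
   by induction. *)

Lemma leq_cdivn a b x : 0 < b -> a <= b * x -> cdivn a b <= x.
Proof. by move=> b_gt0 le_a; rewrite /cdivn -ltnS ltn_divLR //; lia. Qed.

Lemma rho_seq0 K d i : rho_seq K d 0 i = 0.
Proof.
elim: i => [|i IHi] //=; rewrite IHi muln0 /cdivn.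
by case: (K - i.+1) => [|b] //; rewrite divn_small.
Qed.

Lemma exists_ge_mean (T : finType) (A : {set T}) (g : T -> nat) :
  0 < #|A| -> exists2 x, x \in A & \sum_(y in A) g y <= #|A| * g x.
Proof.
move=> A_gt0; have [x xA max_x] := eq_bigmax_cond g A_gt0.
exists x => //; rewrite -max_x -sum_nat_const; apply: leq_sum => y yA.
exact: leq_bigmax_cond.
Qed.

Section CommonNeighbourhood.
Variables (K F : nat) (e : 'I_K -> 'I_F -> bool).

Definition common_nbhd (s : seq 'I_K) : {set 'I_F} := [set f | all (e^~ f) s].

Lemma common_nbhd_rcons s u :
  common_nbhd (rcons s u) = common_nbhd s :&: [set f | e u f].
Proof. by apply/setP => f; rewrite !inE all_rcons andbC. Qed.

Lemma common_nbhd1 u : common_nbhd [:: u] = [set f | e u f].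
Proof. by apply/setP => f; rewrite !inE /= andbT. Qed.

Variable d : nat.
Hypothesis right_regular : forall f, #|[set k | e k f]| = d.

Lemma sum_card_common_nbhd_rcons s : uniq s ->
  \sum_(u in ~: [set u in s]) #|common_nbhd (rcons s u)|
    = #|common_nbhd s| * (d - size s).
Proof.
move=> s_uniq; rewrite -sum_nat_const.
under eq_bigr => u _ do rewrite common_nbhd_rcons -sum1_card big_mkcond.
rewrite exchange_big [RHS]big_mkcond /=; apply: eq_bigr => f _.
case: ifP => [f_nbhd | f_out]; last by rewrite big1 // => u _; rewrite inE f_out.
have s_sub : [set u in s] \subset [set k | e k f].
  by apply/subsetP => u; rewrite !inE; move: f_nbhd; rewrite inE => /allP; apply.
have := cardsID [set u in s] [set k | e k f].
rewrite (setIidPr s_sub) right_regular cardsE (card_uniqP s_uniq) => <-.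
rewrite addKn setDE setIC -sum1_card [RHS]big_mkcond /=.
rewrite big_mkcond; apply: eq_bigr => u _; rewrite in_setI f_nbhd !inE.
by case: (u \in s).
Qed.

Lemma exists_common_nbhd_rcons s : uniq s -> size s < K ->
  exists2 u, u \notin s &
    (d - size s) * #|common_nbhd s| <= (K - size s) * #|common_nbhd (rcons s u)|.
Proof.
move=> s_uniq lt_s_K.
have card_rest : #|~: [set u in s]| = K - size s.
  have := cardsC [set u in s]; rewrite card_ord cardsE (card_uniqP s_uniq).
  by move/(congr1 (subn^~ (size s))); rewrite addKn.
have [|u] := exists_ge_mean (A := ~: [set u in s])
  (fun u => #|common_nbhd (rcons s u)|).
  by rewrite card_rest subn_gt0.
rewrite !inE sum_card_common_nbhd_rcons // card_rest mulnC => u_new le_mean.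
by exists u.
Qed.

Variable D : nat.
Hypothesis left_regular : forall k, #|[set f | e k f]| = D.

Lemma exists_users_rho_le : d <= K -> forall j, j <= d ->
  exists2 us : seq 'I_K, uniq us /\ size us = j &
    forall i, i < j -> rho_seq K d D i <= #|common_nbhd (take i.+1 us)|.
Proof.
move=> le_d_K; elim=> [|j IHj] lt_j_d; first by exists [::].
have [us [us_uniq size_us] rho_le] := IHj (ltnW lt_j_d).
have [u u_new le_step] : exists2 u, u \notin us &
    rho_seq K d D j <= #|common_nbhd (rcons us u)|.
  case: j {IHj} lt_j_d size_us rho_le => [|j] lt_j_d size_us rho_le.
    have u : 'I_K by apply: (@Ordinal _ 0); lia.
    move/size0nil: size_us => ->.
    by exists u; rewrite //= common_nbhd1 left_regular.
  have [|u u_new le_u] := exists_common_nbhd_rcons us_uniq.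
    by rewrite size_us (leq_trans lt_j_d).
  exists u => //=; apply: leq_cdivn; first by lia.
  rewrite -size_us; apply: leq_trans le_u; rewrite leq_mul2l.
  by have := rho_le j (ltnSn j); rewrite -size_us take_size orbC => ->.
exists (rcons us u); first by rewrite rcons_uniq u_new size_rcons size_us.
move=> i; rewrite ltnS leq_eqVlt => /orP[/eqP -> | lt_i_j].
  by rewrite take_oversize // size_rcons size_us.
by rewrite -cats1 takel_cat ?size_us //; apply: rho_le.
Qed.

End CommonNeighbourhood.

Lemma INR_expn b n : INR (expn b n) = (INR b ^ n)%R.
Proof. by elim: n => [|n IHn] //; rewrite expnS mult_INR IHn. Qed.

Lemma pow_le_Rpower_exponent (b x : R) (n : nat) :
  (1 < b)%R -> (b ^ n <= Rpower b x)%R -> (INR n <= x)%R.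
Proof.
move=> b_gt1 le_pow; apply: Rnot_lt_le => lt_x_n.
have := Rpower_lt _ _ _ b_gt1 lt_x_n.
by rewrite Rpower_pow; [lra | lra].
Qed.

Section DecodingChain.
Variables (G : finType) (g0 : G) (N K F : nat) (e : 'I_K -> 'I_F -> bool).
Variable us : seq 'I_K.
Hypothesis us_uniq : uniq us.

Let dem (u : 'I_K) : 'I_N.+1 := inord (index u us).

Let V : {set 'I_N.+1 * 'I_F} :=
  [set x : 'I_N.+1 * 'I_F |
    (x.1 < size us) && (x.2 \in common_nbhd e (take x.1.+1 us))].

Let supp := pffun_on g0 V predT.

Lemma V_uncached u a f :
  u \in us -> (a, f) \in V -> ~~ e u f -> a < index u us.
Proof.
move=> u_us; rewrite inE /= => /andP[_ /[!inE] /allP f_nbhd].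
by apply: contraNT; rewrite -leqNgt -ltnS -in_take // => /f_nbhd ->.
Qed.

Lemma supp_out W x : W \in supp -> x \notin V -> W x = g0.
Proof.
case/pffun_onP => /subsetP W_supp _ xV; apply/eqP; apply: contraNT xV.
by move=> Wx; apply: W_supp; rewrite inE.
Qed.

Lemma cache_of_eq u W W' : u \in us -> W \in supp -> W' \in supp ->
  (forall (a : 'I_N.+1) f, a < index u us -> W (a, f) = W' (a, f)) ->
  cache_of e u W = cache_of e u W'.
Proof.
move=> u_us W_supp W'_supp eq_prefix; apply/ffunP => -[a f]; rewrite !ffunE /=.
case: ifPn => // uncached; congr Some.
have [aV | aV] := boolP ((a, f) \in V); last by rewrite !supp_out.
exact/eq_prefix/(V_uncached u_us aV).
Qed.

Variables (m : nat) (enc : library G N.+1 F -> 'I_m).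
Variable dec :
  'I_K -> 'I_m -> {ffun 'I_N.+1 * 'I_F -> option G} -> {ffun 'I_F -> G}.
Hypothesis dec_enc :
  forall W k, dec k (enc W) (cache_of e k W) = [ffun f => W (dem k, f)].

Lemma enc_supp_inj : {in supp &, injective enc}.
Proof.
move=> W W' W_supp W'_supp eq_enc.
suff eq_prefix i : forall (a : 'I_N.+1) f, a < i -> W (a, f) = W' (a, f).
  by apply/ffunP => -[a f]; apply: (eq_prefix N.+1).
elim: i => [//|i IHi] a f; rewrite ltnS leq_eqVlt.
case/orP=> [/eqP a_i | ]; last exact: IHi.
have [i_us | us_i] := ltnP i (size us); last first.
  by rewrite !supp_out // inE /= negb_and a_i -leqNgt us_i.
have [u0 _] : exists u0 : 'I_K, true by case: (us) i_us => // u0 _ _; exists u0.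
pose u := nth u0 us i; have u_us : u \in us by apply: mem_nth.
have dem_u : dem u = a.
  by apply: val_inj; rewrite /dem /u /= index_uniq // inordK // -a_i.
have := dec_enc W u; rewrite eq_enc (cache_of_eq u_us W_supp W'_supp) ?dec_enc.
  by rewrite dem_u => /ffunP /(_ f); rewrite !ffunE.
by move=> b f'; rewrite index_uniq //; apply: IHi.
Qed.

Lemma card_V : size us <= N.+1 ->
  #|V| = \sum_(i < size us) #|common_nbhd e (take i.+1 us)|.
Proof.
move=> us_le.
have -> : #|V| = \sum_(a < N.+1) \sum_(f < F) ((a, f) \in V : nat).
  rewrite pair_bigA -sum1_card big_mkcond /=.
  by apply: eq_bigr => -[a f] _; case: ifP.
rewrite (big_ord_widen _ (fun i => #|common_nbhd e (take i.+1 us)|) us_le).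
rewrite [RHS]big_mkcond; apply: eq_bigr => a _ /=.
case: ifP => a_us; last by rewrite big1 // => f _; rewrite inE a_us.
by rewrite -sum1_card [RHS]big_mkcond; apply: eq_bigr => f _; rewrite inE a_us.
Qed.

Lemma expn_card_V_le : expn #|G| #|V| <= m.
Proof.
rewrite -(card_pffun_on g0) -(card_in_imset enc_supp_inj).
by apply: leq_trans (max_card _) _; rewrite card_ord.
Qed.

End DecodingChain.

Lemma achievable_rate_ge_sum_common_nbhd (G : finType) N K F
    (e : 'I_K -> 'I_F -> bool) (r : R) (us : seq 'I_K) :
  1 < #|G| -> 0 < N -> uniq us -> size us <= N -> achievable_rate G N e r ->
  (INR (\sum_(i < size us) #|common_nbhd e (take i.+1 us)|) <= r * INR F)%R.
Proof.
case: N => // N G_gt1 _ us_uniq us_le achievable.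
have /card_gt0P[g0 _] := ltnW G_gt1.
have [m [enc [dec [m_le dec_enc]]]] := achievable (fun u => inord (index u us)).
rewrite -(card_V e us_le); apply: (pow_le_Rpower_exponent (b := INR #|G|)).
  by apply: (lt_INR 1); apply/ltP.
rewrite -INR_expn; apply: Rle_trans m_le; apply/le_INR/leP.
by have := expn_card_V_le g0 us_uniq dec_enc.
Qed.

Theorem theorem9 (G : finZmodType) (N K F : nat) (M : R)
  (e : 'I_K -> 'I_F -> bool) (D d : nat) :
  (1 < #|G|)%N ->
  (0 < N)%N ->
  INR D = (INR F * (1 - M / INR N))%R ->
  INR d = (INR K * (1 - M / INR N))%R ->
  (forall k : 'I_K, #|[set f | e k f]| = D) ->
  (forall f : 'I_F, #|[set k | e k f]| = d) ->
  (INR K * (1 - M / INR N) <= INR N)%R ->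
  forall r : R, @achievable_rate G N K F e r ->
  (INR (\sum_(i < d) rho_seq K d D i) <= r * INR F)%R.
Proof.
move=> G_gt1 N_gt0 D_def d_def left_regular right_regular d_le_N r achievable.
have le_d_N : d <= N by apply/leP/INR_le; rewrite d_def.
have [F0 | F_gt0] := posnP F.
  have -> : D = 0 by apply: INR_eq; rewrite D_def F0 /=; ring.
  by rewrite big1 => [|i _]; rewrite ?rho_seq0 // F0 /=; lra.
have le_d_K : d <= K.
  by rewrite -(right_regular (Ordinal F_gt0)) -[leqRHS]card_ord max_card.
have [us [us_uniq size_us] rho_le] :=
  exists_users_rho_le right_regular left_regular le_d_K (leqnn d).
have := achievable_rate_ge_sum_common_nbhd G_gt1 N_gt0 us_uniq _ achievable.
rewrite size_us => /(_ le_d_N); apply: Rle_trans.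
by apply/le_INR/leP/leq_sum => i _; apply: rho_le.
Qed.
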